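(* Let $A,B,D$ be lattices with finite generating sets $X_0,Y_0,P$ respectively, let $D$ satisfy Dean's condition (D) for $P$, and let $g\colon A\to D$, $h\colon B\to D$ be bounded epimorphisms. Let $E:=g(X_0)\cup h(Y_0)\cup P$ and $$Z:=\{(x,\alpha_h g(x)) : x\in X_0\}\cup\{(\beta_g h(y),y): y\in Y_0\}\cup\{(\alpha_g(d),\beta_h(d)) : d\in E\}\cup\{(\beta_g(d),\alpha_h(d)): d\in E\}\subseteq A\times B.$$ Let $X$ be the set of first components and $Y$ the set of second components of elements of $Z$ (these are finite generating sets of $A$ and $B$), and let $\langle Z\rangle$ be the sublattice of $A\times B$ generated by $Z$. Then for every $k\in\mathbb N$: (1) for all $b\in G_{Y,k}$ we have $(\alpha_{g,k}(h(b)),\,b)\in\langle Z\rangle$; (2) for all $a\in H_{X,k}$ we have $(a,\,\beta_{h,k}(g(a)))\in\langle Z\rangle$. Here $G,H,\alpha_{g,k},\beta_{h,k}$ are computed with respect to the generating set $X$ of $A$ (for $g$) and $Y$ of $B$ (for $h$).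
   Context: A lattice homomorphism $g\colon A\to D$ is lower bounded if for every $d\in D$ the set $\{x\in A : g(x)\ge d\}$ is empty or has a least element; upper bounded if for every $d$ the set $\{x: g(x)\le d\}$ is empty or has a greatest element; bounded if both. For a bounded epimorphism $g$, $\beta_g(d):=\bigwedge g^{-1}(d)$ is the least and $\alpha_g(d):=\bigvee g^{-1}(d)$ the greatest preimage of $d$. Dean's condition (D) for a lattice $D$ with finite generating set $P$: for all finite $S,T\subseteq D$ with $\bigwedge S\le\bigvee T$, either some $s\in S$ has $s\le\bigvee T$, or some $t\in T$ has $\bigwedge S\le t$, or some $p\in P$ has $\bigwedge S\le p\le\bigvee T$. For a lattice $A$ with finite generating set $X$ and $W\subseteq A$, let $W^\wedge:=\{\bigwedge U: U\subseteq W\text{ finite}\}$ and $W^\vee:=\{\bigvee U: U\subseteq W \text{ finite}\}$, with the conventions $\bigwedge\emptyset:=\bigvee X$ and $\bigvee\emptyset:=\bigwedge X$. Define $G_{X,0}:=X$, $H_{X,k}:=G_{X,k}^\wedge$, $G_{X,k+1}:=H_{X,k}^\vee$ for $k\in\mathbb N$. For an epimorphism $g\colon A\to D$, $k\in\mathbb N$, $d\in D$: $\alpha_{g,k}(d):=\bigvee\{w\in G_{X,k}: g(w)\le d\}$ and $\beta_{g,k}(d):=\bigwedge\{w\in H_{X,k}: g(w)\ge d\}$. *)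

(* lattices are MathComp's [latticeType d] (no bounds assumed). *)
From HB Require Import structures.
From mathcomp Require Import all_boot all_order.
Set Implicit Arguments. Unset Strict Implicit. Unset Printing Implicit Defensive.
Import Order.LTheory.
Local Open Scope order_scope.

Definition meet_ne {d} {T : latticeType d} (x : T) (s : seq T) : T :=
  foldr Order.meet x s.
Definition join_ne {d} {T : latticeType d} (x : T) (s : seq T) : T :=
  foldr Order.join x s.

(* [is_meet X U w] : w = /\ U, with the convention /\ [::] := \/ X
   (undefined, i.e. no value, if X is empty). *)
Definition is_meet {d} {T : latticeType d} (X U : seq T) (w : T) : Prop :=
  match U with
  | [::] => if X is x :: xs then w = join_ne x xs else False
  | u :: us => w = meet_ne u us
  end.
(* [is_join X U w] : w = \/ U, with the convention \/ [::] := /\ X. *)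
Definition is_join {d} {T : latticeType d} (X U : seq T) (w : T) : Prop :=
  match U with
  | [::] => if X is x :: xs then w = meet_ne x xs else False
  | u :: us => w = join_ne u us
  end.

Definition meetcl {d} {T : latticeType d} (X : seq T) (W : T -> Prop) : T -> Prop :=
  fun w => exists U : seq T, (forall u, u \in U -> W u) /\ is_meet X U w.
Definition joincl {d} {T : latticeType d} (X : seq T) (W : T -> Prop) : T -> Prop :=
  fun w => exists U : seq T, (forall u, u \in U -> W u) /\ is_join X U w.

Fixpoint GX {d} {T : latticeType d} (X : seq T) (k : nat) : T -> Prop :=
  match k with
  | 0 => fun w => w \in X
  | k'.+1 => joincl X (meetcl X (GX X k'))
  end.
Definition HX {d} {T : latticeType d} (X : seq T) (k : nat) : T -> Prop :=
  meetcl X (GX X k).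

(* a = \/ S (resp. /\ S) for a finite set S, given by an enumerating list *)
Definition is_join_set {d} {T : latticeType d} (X : seq T) (S : T -> Prop) (a : T) :=
  exists U : seq T, (forall w, w \in U <-> S w) /\ is_join X U a.
Definition is_meet_set {d} {T : latticeType d} (X : seq T) (S : T -> Prop) (a : T) :=
  exists U : seq T, (forall w, w \in U <-> S w) /\ is_meet X U a.

Definition alpha_k {dA dD} {A : latticeType dA} {D : latticeType dD}
  (X : seq A) (g : A -> D) (k : nat) (dd : D) (a : A) : Prop :=
  is_join_set X (fun w => GX X k w /\ g w <= dd) a.
Definition beta_k {dA dD} {A : latticeType dA} {D : latticeType dD}
  (X : seq A) (g : A -> D) (k : nat) (dd : D) (a : A) : Prop :=
  is_meet_set X (fun w => HX X k w /\ dd <= g w) a.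

Definition lattice_hom {dA dD} {A : latticeType dA} {D : latticeType dD} (g : A -> D) :=
  (forall x y, g (Order.meet x y) = Order.meet (g x) (g y)) /\
  (forall x y, g (Order.join x y) = Order.join (g x) (g y)).
Definition lattice_epi {dA dD} {A : latticeType dA} {D : latticeType dD} (g : A -> D) :=
  lattice_hom g /\ (forall dd, exists x, g x = dd).

Definition lower_bounded {dA dD} {A : latticeType dA} {D : latticeType dD} (g : A -> D) :=
  forall dd : D, (forall x, ~ (dd <= g x)) \/
    (exists m, dd <= g m /\ forall x, dd <= g x -> m <= x).
Definition upper_bounded {dA dD} {A : latticeType dA} {D : latticeType dD} (g : A -> D) :=
  forall dd : D, (forall x, ~ (g x <= dd)) \/
    (exists m, g m <= dd /\ forall x, g x <= dd -> x <= m).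
Definition bounded {dA dD} {A : latticeType dA} {D : latticeType dD} (g : A -> D) :=
  lower_bounded g /\ upper_bounded g.

Definition is_least_preimage {dA dD} {A : latticeType dA} {D : latticeType dD}
  (g : A -> D) (dd : D) (m : A) := g m = dd /\ forall x, g x = dd -> m <= x.
Definition is_greatest_preimage {dA dD} {A : latticeType dA} {D : latticeType dD}
  (g : A -> D) (dd : D) (m : A) := g m = dd /\ forall x, g x = dd -> x <= m.

Inductive gen {T : Type} (m j : T -> T -> T) (S : T -> Prop) : T -> Prop :=
| gen_base x : S x -> gen m j S x
| gen_meet x y : gen m j S x -> gen m j S y -> gen m j S (m x y)
| gen_join x y : gen m j S x -> gen m j S y -> gen m j S (j x y).

Definition generates {d} {T : latticeType d} (X : seq T) :=
  forall a : T, gen Order.meet Order.join (fun x => x \in X) a.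

Definition pmeet {dA dB} {A : latticeType dA} {B : latticeType dB} (p q : A * B) : A * B :=
  (Order.meet p.1 q.1, Order.meet p.2 q.2).
Definition pjoin {dA dB} {A : latticeType dA} {B : latticeType dB} (p q : A * B) : A * B :=
  (Order.join p.1 q.1, Order.join p.2 q.2).
Definition in_sublat_gen {dA dB} {A : latticeType dA} {B : latticeType dB}
  (Z : seq (A * B)) (p : A * B) : Prop :=
  gen pmeet pjoin (fun q => q \in Z) p.

Definition dean_D {d} {D : latticeType d} (P : seq D) :=
  forall (s : D) (ss : seq D) (t : D) (ts : seq D),
    meet_ne s ss <= join_ne t ts ->
    (exists2 s', s' \in s :: ss & s' <= join_ne t ts) \/
    (exists2 t', t' \in t :: ts & meet_ne s ss <= t') \/
    (exists2 p, p \in P & meet_ne s ss <= p /\ p <= join_ne t ts).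

(* The list Z, given the (least/greatest preimage) maps *)
Definition Zlist {dA dB dD} {A : latticeType dA} {B : latticeType dB} {D : latticeType dD}
  (X0 : seq A) (Y0 : seq B) (P : seq D) (g : A -> D) (h : B -> D)
  (ag bg : D -> A) (ah bh : D -> B) : seq (A * B) :=
  let E := map g X0 ++ map h Y0 ++ P in
  [seq (x, ah (g x)) | x <- X0] ++ [seq (bg (h y), y) | y <- Y0] ++
  [seq (ag e, bh e) | e <- E] ++ [seq (bg e, ah e) | e <- E].

From HB Require Import structures.
From mathcomp Require Import all_boot all_order.
Import Order.LTheory.
Set Implicit Arguments. Unset Strict Implicit. Unset Printing Implicit Defensive.
Local Open Scope order_scope.

(* L lies in the pullback {(a, b) | g a = h b}, and alpha (beta) is the join
   (meet) of a finite set, so it suffices to prove, for every k,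
   - lift_up k: if b is in G_{Y,k}, u in G_{X,k}, g u <= h b, and a0 bounds
     every element counted in alpha_{g,k}(h b), then some (a', b) in L has
     u <= a' <= a0;
   - lift_down k: dually, if a is in H_{X,k}, w in H_{Y,k}, g a <= h w, and b0
     is below every element counted in beta_{h,k}(g a), then some (a, w') in L
     has b0 <= w' <= w.
   They follow by simultaneous induction: lift_up 0, lift_up k -> lift_down k,
   lift_down k -> lift_up k.+1.  Each step is an inner induction on the level of
   u (resp. w) in which Dean's condition (D) splits an inequality
   g (/\ U) <= h (\/ V) into an inner-induction case, a case settled by the other
   statement, and a case through a generator p of D; the pairs
   (alpha_g e, beta_h e) of Z, for e = g x, h y or p, provide the base cases. *)

Section Folds.
Variables (T T' : eqType) (op : T -> T -> T) (op' : T' -> T' -> T').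

Lemma in_cons_skip (v : T) {u x : T} {us} : x \in u :: us -> x \in u :: v :: us.
Proof. by rewrite !inE => /orP [->|->]; rewrite ?orbT. Qed.

Lemma foldr_ind (Q : T -> Prop) u us :
  (forall x y, Q x -> Q y -> Q (op x y)) ->
  (forall x, x \in u :: us -> Q x) -> Q (foldr op u us).
Proof.
move=> Hop; elim: us => [|v us IH] HQ /=; first by apply: HQ; rewrite mem_head.
apply: Hop; first by apply: HQ; rewrite !inE eqxx orbT.
by apply: IH => x /(in_cons_skip v) /HQ.
Qed.

Lemma foldr_transfer (R : T -> T' -> Prop) (S : T' -> Prop) u us :
  (forall a b c e, R a b -> R c e -> R (op a c) (op' b e)) ->
  (forall x, x \in u :: us -> exists2 c, S c & R x c) ->
  exists c cs, (forall y, y \in c :: cs -> S y) /\ R (foldr op u us) (foldr op' c cs).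
Proof.
move=> HR; elim: us => [|v us IH] Hx /=.
  have [c Sc Rc] := Hx u (mem_head _ _).
  by exists c, [::]; split => // y; rewrite inE => /eqP ->.
have [|c [cs [Hcs Rcs]]] := IH; first by move=> x /(in_cons_skip v) /Hx.
have [c' Sc' Rc'] : exists2 c, S c & R v c by apply: Hx; rewrite !inE eqxx orbT.
exists c, (c' :: cs); split; last exact: HR.
by move=> y; rewrite !inE => /or3P [/eqP ->|/eqP ->|Hy] //; apply: Hcs;
  rewrite inE ?eqxx ?Hy ?orbT.
Qed.

End Folds.

Lemma gen_mono (T : Type) (m j : T -> T -> T) (S S' : T -> Prop) a :
  (forall x, S x -> S' x) -> gen m j S a -> gen m j S' a.
Proof.
move=> HS; elim=> [x /HS|x y _ Hx _ Hy|x y _ Hx _ Hy];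
  [exact: gen_base | exact: gen_meet | exact: gen_join].
Qed.

Section FiniteMeetsJoins.
Context {d : Order.disp_t} {T : latticeType d}.
Implicit Types (u v w x : T) (us X U : seq T).

Lemma meet_ne_le u us x : x \in u :: us -> meet_ne u us <= x.
Proof.
elim: us x => [|v us IH] x /=; first by rewrite inE => /eqP ->.
rewrite !inE => /or3P [/eqP ->|/eqP ->|Hx].
- exact: le_trans (leIr _ _) (IH _ (mem_head _ _)).
- exact: leIl.
- by apply: le_trans (leIr _ _) (IH _ _); rewrite inE Hx orbT.
Qed.

Lemma join_ne_ge u us x : x \in u :: us -> x <= join_ne u us.
Proof.
elim: us x => [|v us IH] x /=; first by rewrite inE => /eqP ->.
rewrite !inE => /or3P [/eqP ->|/eqP ->|Hx].
- by apply: lexUr; apply: IH; rewrite mem_head.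
- exact: leUl.
- by apply: lexUr; apply: IH; rewrite inE Hx orbT.
Qed.

Lemma gen_bounds x0 xs : generates (x0 :: xs) ->
  forall a, meet_ne x0 xs <= a /\ a <= join_ne x0 xs.
Proof.
move=> HG a; elim: (HG a) => [x Hx|x y _ [H1 H2] _ [H3 H4]|x y _ [H1 H2] _ [H3 H4]].
- by split; [apply: meet_ne_le | apply: join_ne_ge].
- by split; [rewrite lexI H1 H3 | apply: leIxl].
- by split; [apply: lexUl | rewrite leUx H2 H4].
Qed.

Lemma is_meet_ind X U w (Q : T -> Prop) :
  (forall x y, Q x -> Q y -> Q (x `&` y)) -> (forall t, is_meet X [::] t -> Q t) ->
  (forall u, u \in U -> Q u) -> is_meet X U w -> Q w.
Proof.
by case: U => [|u us] /= Hop Htop HU; [apply: Htop | move=> ->; apply: foldr_ind].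
Qed.

Lemma is_join_ind X U w (Q : T -> Prop) :
  (forall x y, Q x -> Q y -> Q (x `|` y)) -> (forall t, is_join X [::] t -> Q t) ->
  (forall u, u \in U -> Q u) -> is_join X U w -> Q w.
Proof.
by case: U => [|u us] /= Hop Hbot HU; [apply: Hbot | move=> ->; apply: foldr_ind].
Qed.

Lemma is_meet_le X U w u : u \in U -> is_meet X U w -> w <= u.
Proof. by case: U => [//|u0 us] /= Hu ->; apply: meet_ne_le. Qed.

Lemma is_join_ge X U w u : u \in U -> is_join X U w -> u <= w.
Proof. by case: U => [//|u0 us] /= Hu ->; apply: join_ne_ge. Qed.

Lemma G_in_H X j u : GX X j u -> HX X j u.
Proof. by move=> Hu; exists [:: u]; split => // x; rewrite inE => /eqP ->. Qed.

Lemma H_in_G X j u : HX X j u -> GX X j.+1 u.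
Proof. by move=> Hu; exists [:: u]; split => // x; rewrite inE => /eqP ->. Qed.

Lemma GX_mono X j k u : (j <= k)%N -> GX X j u -> GX X k u.
Proof.
elim: k => [|k IH]; first by rewrite leqn0 => /eqP ->.
rewrite leq_eqVlt => /predU1P [-> //|/IH Hjk /Hjk Hu].
exact/H_in_G/G_in_H.
Qed.

Lemma HX_mono X j k u : (j <= k)%N -> HX X j u -> HX X k u.
Proof. by move=> Hjk [U [HU HM]]; exists U; split => // x /HU; apply: GX_mono. Qed.

Lemma X_in_G X j x : x \in X -> GX X j x.
Proof. exact: (@GX_mono X 0). Qed.

Lemma top_in_H X j t : is_meet X [::] t -> HX X j t.
Proof. by exists [::]. Qed.

Lemma bot_in_H X j t : is_join X [::] t -> HX X j t.
Proof.
by case: X => [//|x0 xs] /= ->; exists (x0 :: xs); split => // x; apply: X_in_G.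
Qed.

Lemma GX_nil j u : ~ GX [::] j u.
Proof.
elim: j u => [|j IH] u //= [[|v U] [HU HM]] //.
have [[|w W] [HW HM']] := HU v (mem_head _ _) => //.
exact: IH (HW w (mem_head _ _)).
Qed.

Lemma HX_nil j u : ~ HX [::] j u.
Proof.
by move=> [[|v U] [HU _]] //; apply: (@GX_nil j v); apply: HU; rewrite mem_head.
Qed.

Lemma H_dec X j a : HX X j a ->
  is_meet X [::] a \/
  exists u us, a = meet_ne u us /\ forall x, x \in u :: us -> GX X j x.
Proof. by move=> [[|u us] [HU HM]]; [left | right; exists u, us]. Qed.

(* From level 1 on, the top itself lies in G_{X,j}, so the meet is nonempty. *)
Lemma H_pos_dec X j a : (0 < j)%N -> HX X j a ->
  exists u us, a = meet_ne u us /\ forall x, x \in u :: us -> GX X j x.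
Proof.
case: j => [//|j] _; case/H_dec => [Htop|//]; exists a, [::]; split => // x.
by rewrite inE => /eqP ->; apply: H_in_G; apply: top_in_H.
Qed.

Lemma GS_dec X j a : GX X j.+1 a ->
  exists u us, a = join_ne u us /\ forall x, x \in u :: us -> HX X j x.
Proof.
move=> [[|u us] [HU HM]]; last by exists u, us.
by exists a, [::]; split => // x; rewrite inE => /eqP ->; apply: bot_in_H.
Qed.

End FiniteMeetsJoins.

Section Homomorphisms.
Context {d d' : Order.disp_t} {T : latticeType d} {T' : latticeType d'}.
Implicit Types (g : T -> T') (X U : seq T) (Y : seq T').

Lemma hom_mono g x y : lattice_hom g -> x <= y -> g x <= g y.
Proof. by move=> [_ Hj] /join_idPr H; apply/join_idPr; rewrite -Hj H. Qed.

Lemma hom_meet_ne g u us : lattice_hom g -> g (meet_ne u us) = meet_ne (g u) (map g us).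
Proof. by move=> [Hm _]; elim: us => [|v us IH] //=; rewrite Hm IH. Qed.

Lemma hom_join_ne g u us : lattice_hom g -> g (join_ne u us) = join_ne (g u) (map g us).
Proof. by move=> [_ Hj]; elim: us => [|v us IH] //=; rewrite Hj IH. Qed.

Lemma greatest_preimage_ge g e m x :
  lattice_hom g -> is_greatest_preimage g e m -> g x <= e -> x <= m.
Proof.
move=> [_ Hj] [Hm Hmax] Hx; apply: le_trans (leUl x m) _; apply: Hmax.
by rewrite Hj Hm; apply/join_idPr.
Qed.

Lemma least_preimage_le g e m x :
  lattice_hom g -> is_least_preimage g e m -> e <= g x -> m <= x.
Proof.
move=> [Hm _] [He Hmin] Hx; apply: le_trans _ (leIl x m); apply: Hmin.
by rewrite Hm He; apply/meet_idPr.
Qed.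

Lemma meetcl_transfer (R : T -> T' -> Prop) X Y W W' :
  (forall a b c e, R a b -> R c e -> R (a `&` c) (b `&` e)) ->
  (forall w, is_meet X [::] w -> exists2 c, is_meet Y [::] c & R w c) ->
  (forall u, W u -> exists2 c, W' c & R u c) ->
  forall u, meetcl X W u -> exists2 c, meetcl Y W' c & R u c.
Proof.
move=> HR Htop HW u [[|u0 us] [HU /= Hu]].
  by have [c Hc Rc] := Htop u Hu; exists c => //; exists [::].
have [|c [cs [Hcs Rc]]] := @foldr_transfer _ _ _ _ R W' u0 us HR.
  by move=> x /HU /HW.
by exists (meet_ne c cs); [exists (c :: cs) | rewrite Hu].
Qed.

Lemma joincl_transfer (R : T -> T' -> Prop) X Y W W' :
  (forall a b c e, R a b -> R c e -> R (a `|` c) (b `|` e)) ->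
  (forall w, is_join X [::] w -> exists2 c, is_join Y [::] c & R w c) ->
  (forall u, W u -> exists2 c, W' c & R u c) ->
  forall u, joincl X W u -> exists2 c, joincl Y W' c & R u c.
Proof.
move=> HR Hbot HW u [[|u0 us] [HU /= Hu]].
  by have [c Hc Rc] := Hbot u Hu; exists c => //; exists [::].
have [|c [cs [Hcs Rc]]] := @foldr_transfer _ _ _ _ R W' u0 us HR.
  by move=> x /HU /HW.
by exists (join_ne c cs); [exists (c :: cs) | rewrite Hu].
Qed.

Lemma level_transfer (R : T -> T' -> Prop) X Y :
  (forall a b c e, R a b -> R c e -> R (a `&` c) (b `&` e)) ->
  (forall a b c e, R a b -> R c e -> R (a `|` c) (b `|` e)) ->
  (forall x, x \in X -> exists2 y, y \in Y & R x y) ->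
  (forall w, is_meet X [::] w -> exists2 c, is_meet Y [::] c & R w c) ->
  (forall w, is_join X [::] w -> exists2 c, is_join Y [::] c & R w c) ->
  forall j, (forall u, GX X j u -> exists2 c, GX Y j c & R u c) /\
            (forall u, HX X j u -> exists2 c, HX Y j c & R u c).
Proof.
move=> HM HJ HXY Htop Hbot j.
suff HG : forall u, GX X j u -> exists2 c, GX Y j c & R u c.
  by split => //; apply: meetcl_transfer.
elim: j => [|j IH] //=; apply: joincl_transfer => //; exact: meetcl_transfer.
Qed.

End Homomorphisms.

Section Claim.
Context {dA dB dD : Order.disp_t} {A : latticeType dA} {B : latticeType dB}
  {D : latticeType dD}.
Variables (g : A -> D) (h : B -> D) (ag : D -> A) (bh : D -> B) (P : seq D)
  (z0 : A * B) (zs : seq (A * B)).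

Local Notation Z := (z0 :: zs).
Local Notation X := (map fst Z).
Local Notation Y := (map snd Z).
Local Notation L := (in_sublat_gen Z).
Local Notation topA := (join_ne z0.1 (map fst zs)).
Local Notation botA := (meet_ne z0.1 (map fst zs)).
Local Notation topB := (join_ne z0.2 (map snd zs)).
Local Notation botB := (meet_ne z0.2 (map snd zs)).

(* The hypotheses below abstract what is used of the list Z of the theorem: it
   is nonempty, its coordinates generate A and B, it lies in the pullback of g
   and h, and it contains (alpha_g e, beta_h e) for e in g X, h Y and P. *)

Definition covered (e : D) : bool := (ag e, bh e) \in Z.

Hypotheses (Hg : lattice_hom g) (Hh : lattice_hom h)
  (Hag : forall e, is_greatest_preimage g e (ag e))
  (Hbh : forall e, is_least_preimage h e (bh e))
  (HD : dean_D P) (HgenX : generates X) (HgenY : generates Y)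
  (HZ : forall z, z \in Z -> g z.1 = h z.2)
  (HcovX : forall x, x \in X -> covered (g x))
  (HcovY : forall y, y \in Y -> covered (h y))
  (HcovP : forall p, p \in P -> covered p).

Lemma L_meet a b c e : L (a, b) -> L (c, e) -> L (a `&` c, b `&` e).
Proof. exact: gen_meet. Qed.

Lemma L_join a b c e : L (a, b) -> L (c, e) -> L (a `|` c, b `|` e).
Proof. exact: gen_join. Qed.

Lemma L_pullback a b : L (a, b) -> g a = h b.
Proof.
suff HL p : L p -> g p.1 = h p.2 by move/HL.
elim=> [q /HZ //|q r _ H1 _ H2|q r _ H1 _ H2] /=.
- by rewrite Hg.1 Hh.1 H1 H2.
- by rewrite Hg.2 Hh.2 H1 H2.
Qed.

Lemma L_top : L (topA, topB).
Proof.
have -> : (topA, topB) = foldr pjoin z0 zs by elim: zs => [|z zs' /= <-] //; case: z0.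
by apply: foldr_ind => [x y|z Hz]; [apply: gen_join | apply: gen_base].
Qed.

Lemma L_bot : L (botA, botB).
Proof.
have -> : (botA, botB) = foldr pmeet z0 zs by elim: zs => [|z zs' /= <-] //; case: z0.
by apply: foldr_ind => [x y|z Hz]; [apply: gen_meet | apply: gen_base].
Qed.

Lemma boundA a : botA <= a /\ a <= topA.
Proof. exact: gen_bounds HgenX a. Qed.

Lemma boundB b : botB <= b /\ b <= topB.
Proof. exact: gen_bounds HgenY b. Qed.

Lemma partner_G k b : GX Y k b -> exists2 c, GX X k c & L (c, b).
Proof.
apply: (@level_transfer _ _ _ _ (fun b' a' => L (a', b')) Y X _ _ _ _ _ k).1.
- by move=> *; apply: L_meet.
- by move=> *; apply: L_join.
- move=> y /mapP [z Hz ->]; exists z.1; first exact: map_f.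
  by case: z Hz => ? ? Hz; apply: gen_base.
- by move=> w /= ->; exists topA => //; apply: L_top.
- by move=> w /= ->; exists botA => //; apply: L_bot.
Qed.

Lemma partner_H k a : HX X k a -> exists2 c, HX Y k c & L (a, c).
Proof.
apply: (@level_transfer _ _ _ _ (fun a' b' => L (a', b')) X Y _ _ _ _ _ k).2.
- by move=> *; apply: L_meet.
- by move=> *; apply: L_join.
- move=> x /mapP [z Hz ->]; exists z.2; first exact: map_f.
  by case: z Hz => ? ? Hz; apply: gen_base.
- by move=> w /= ->; exists topB => //; apply: L_top.
- by move=> w /= ->; exists botB => //; apply: L_bot.
Qed.

Lemma dean_split (u0 : A) us (v : B) vs :
  g (meet_ne u0 us) <= h (join_ne v vs) ->
  [\/ exists2 u, u \in u0 :: us & g u <= h (join_ne v vs),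
      exists2 v', v' \in v :: vs & g (meet_ne u0 us) <= h v' |
      exists2 p, p \in P & g (meet_ne u0 us) <= p /\ p <= h (join_ne v vs)].
Proof.
rewrite (hom_meet_ne _ _ Hg) (hom_join_ne _ _ Hh).
case/HD => [[s Hs Hsle]|[[t Ht Htle]|[p Hp Hp']]].
- have /mapP [u Hu Es] : s \in map g (u0 :: us) by [].
  by apply: Or31; exists u; rewrite -?Es.
- have /mapP [v' Hv' Et] : t \in map h (v :: vs) by [].
  by apply: Or32; exists v'; rewrite -?Et.
- by apply: Or33; exists p.
Qed.

(* The two statements proved by simultaneous induction on k.  [ub_alpha k b a0]
   says that a0 bounds the elements counted in alpha_{g,k}(h b); dually
   [lb_beta k a b0] says that b0 bounds those counted in beta_{h,k}(g a). *)
Definition ub_alpha k b a0 := forall x, GX X k x -> g x <= h b -> x <= a0.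
Definition lb_beta k a b0 := forall y, HX Y k y -> g a <= h y -> b0 <= y.

Definition lift_up k := forall b a0 u, GX Y k b -> ub_alpha k b a0 ->
  GX X k u -> g u <= h b -> exists2 a', L (a', b) & u <= a' <= a0.
Definition lift_down k := forall a b0 w, HX X k a -> lb_beta k a b0 ->
  HX Y k w -> g a <= h w -> exists2 w', L (a, w') & b0 <= w' <= w.

Lemma ub_alpha_top k b : ub_alpha k b topA.
Proof. by move=> x _ _; apply: (boundA x).2. Qed.

Lemma lb_beta_bot k a : lb_beta k a botB.
Proof. by move=> y _ _; apply: (boundB y).1. Qed.

(* Invariant for part (1): u lies below the first coordinate of a pair of L
   bounded by (a0, b). *)
Definition below b a0 u :=
  exists a' b', [/\ L (a', b'), u <= a', a' <= a0 & b' <= b].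

Lemma below_down b a0 u u' : u' <= u -> below b a0 u -> below b a0 u'.
Proof.
move=> Hu [a' [b' [HL Ha' Ha0 Hb]]]; exists a', b'; split => //.
exact: le_trans Ha'.
Qed.

Lemma below_join b a0 u v : below b a0 u -> below b a0 v -> below b a0 (u `|` v).
Proof.
move=> [a1 [b1 [HL1 Hu1 Ha1 Hb1]]] [a2 [b2 [HL2 Hu2 Ha2 Hb2]]].
exists (a1 `|` a2), (b1 `|` b2); split; first exact: L_join.
- exact: leU2.
- by rewrite leUx Ha1 Ha2.
- by rewrite leUx Hb1 Hb2.
Qed.

Lemma below_bot b a0 : below b a0 botA.
Proof.
exists botA, botB; split; first exact: L_bot.
- exact: lexx.
- exact: (boundA a0).1.
- exact: (boundB b).1.
Qed.

Lemma below_covered k b a0 u e : ub_alpha k b a0 -> covered e ->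
  g u <= e -> e <= h b -> below b a0 u.
Proof.
move=> Hub Hcov Hue Heb; have [Hge _] := Hag e.
exists (ag e), (bh e); split; first exact: gen_base.
- exact: greatest_preimage_ge Hg (Hag e) Hue.
- by apply: Hub; [apply: X_in_G; apply: map_f Hcov | rewrite Hge].
- exact: least_preimage_le Hh (Hbh e) Heb.
Qed.

(* The top is a join of generators, each handled by the base case. *)
Lemma below_top k b a0 t : ub_alpha k b a0 -> is_meet X [::] t -> g t <= h b ->
  below b a0 t.
Proof.
move=> Hub /= -> Htop; apply: foldr_ind => [|x Hx]; first exact: below_join.
apply: below_covered Hub (HcovX Hx) (lexx _) _.
exact: le_trans (hom_mono Hg (join_ne_ge Hx)) Htop.
Qed.

(* Joining with a partner of b turns the invariant into the conclusion of
   [lift_up]. *)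
Lemma lift_of_below k b a0 u : GX Y k b -> ub_alpha k b a0 -> below b a0 u ->
  exists2 a', L (a', b) & u <= a' <= a0.
Proof.
move=> Hb Hub [a' [b' [HL Hua Ha0 Hbb]]].
have [c Hc HLc] := partner_G Hb.
exists (c `|` a'); first by have := L_join HLc HL; rewrite (join_idPl Hbb).
by rewrite lexUr //= leUx Ha0 andbT; apply: Hub => //; rewrite (L_pullback HLc).
Qed.

Section LiftUp.
Variables (k : nat) (Hdown : lift_down k) (b v : B) (vs : seq B) (a0 : A).
Hypotheses (Eb : b = join_ne v vs) (Hv : forall y, y \in v :: vs -> HX Y k y)
  (Hub : ub_alpha k.+1 b a0).

(* Inductive step on r in H_{X,j}: unless r is the top, it is a meet of
   elements of G_{X,j}, and Dean's condition splits g r <= h b into the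
   induction hypothesis for a meetand of r, the hypothesis [lift_down k] for a
   joinand of b, or a covered element of P. *)
Lemma below_H j (Hj : (j <= k)%N)
    (IH : forall u, GX X j u -> g u <= h b -> below b a0 u) r :
  HX X j r -> g r <= h b -> below b a0 r.
Proof.
move=> Hr Hgr; have Hrk := HX_mono Hj Hr.
case: (H_dec Hr) => [Htop|[u0 [us [Er HU]]]]; first exact: below_top Hub Htop Hgr.
subst r.
move: (Hgr); rewrite {1}Eb.
case/dean_split => [[u Hu Hgu]|[v' Hv' Hgv']|[p Hp [Hp1 Hp2]]].
- by apply: below_down (meet_ne_le Hu) _; apply: IH (HU u Hu) _; rewrite Eb.
- have [w' HL /andP [_ Hw']] := Hdown Hrk (@lb_beta_bot k _) (Hv Hv') Hgv'.
  exists (meet_ne u0 us), w'; split => //.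
  + by apply: Hub => //; apply: H_in_G.
  + by rewrite Eb; apply: le_trans Hw' (join_ne_ge Hv').
- by apply: below_covered Hub (HcovP Hp) Hp1 _; rewrite Eb.
Qed.

(* Induction on the level j; the invariant is closed under joins. *)
Lemma below_G j : (j <= k.+1)%N -> forall u, GX X j u -> g u <= h b -> below b a0 u.
Proof.
elim: j => [|j IH] Hj u Hu; first exact: below_covered Hub (HcovX Hu) (lexx _).
case: Hu => U [HU HUu].
apply: (is_join_ind (Q := fun u => g u <= h b -> below b a0 u)) HUu.
- by move=> x y Hx Hy; rewrite Hg.2 leUx => /andP [/Hx ? /Hy ?]; apply: below_join.
- by move=> t /= -> _; apply: below_bot.
- by move=> r /HU Hr; apply: below_H Hr => //; apply: IH; apply: ltnW.
Qed.

End LiftUp.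

Lemma lift_up0 : lift_up 0.
Proof.
move=> b a0 u Hb Hub Hu Hgu; apply: (lift_of_below Hb Hub).
exact: below_covered Hub (HcovX Hu) (lexx _) Hgu.
Qed.

Lemma lift_upS k : lift_down k -> lift_up k.+1.
Proof.
move=> Hdown b a0 u Hb Hub Hu Hgu; apply: (lift_of_below Hb Hub).
have [v [vs [Eb Hv]]] := GS_dec Hb.
exact: (below_G Hdown Eb Hv Hub (leqnn _) Hu Hgu).
Qed.

(* Invariant for part (2): w lies above the second coordinate of a pair of L
   bounded below by (a, b0). *)
Definition above a b0 w :=
  exists a' w', [/\ L (a', w'), a <= a', b0 <= w' & w' <= w].

Lemma above_up a b0 w w' : w <= w' -> above a b0 w -> above a b0 w'.
Proof.
move=> Hw [a' [w'' [HL Ha Hb Hw'']]]; exists a', w''; split => //.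
exact: le_trans Hw.
Qed.

Lemma above_meet a b0 w1 w2 : above a b0 w1 -> above a b0 w2 -> above a b0 (w1 `&` w2).
Proof.
move=> [a1 [v1 [HL1 Ha1 Hb1 Hv1]]] [a2 [v2 [HL2 Ha2 Hb2 Hv2]]].
exists (a1 `&` a2), (v1 `&` v2); split; first exact: L_meet.
- by rewrite lexI Ha1 Ha2.
- by rewrite lexI Hb1 Hb2.
- exact: leI2.
Qed.

Lemma above_covered k a b0 w e : lb_beta k a b0 -> covered e ->
  g a <= e -> e <= h w -> above a b0 w.
Proof.
move=> Hlb Hcov Hae Hew; have [Hhe _] := Hbh e.
exists (ag e), (bh e); split; first exact: gen_base.
- exact: greatest_preimage_ge Hg (Hag e) Hae.
- by apply: Hlb; [apply/G_in_H/X_in_G; apply: map_f Hcov | rewrite Hhe].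
- exact: least_preimage_le Hh (Hbh e) Hew.
Qed.

(* The top of B is reached by the pair of tops. *)
Lemma above_top k a b0 t : lb_beta k a b0 -> is_meet Y [::] t -> g a <= h t ->
  above a b0 t.
Proof.
move=> Hlb Ht Hat; have Etop : t = topB := Ht.
exists topA, topB; rewrite -Etop; split; first by rewrite Etop; apply: L_top.
- exact: (boundA a).2.
- by apply: Hlb => //; apply: top_in_H.
- exact: lexx.
Qed.

(* Meeting with a partner of a turns the invariant into the conclusion of
   [lift_down]. *)
Lemma lift_of_above k a b0 w : HX X k a -> lb_beta k a b0 -> above a b0 w ->
  exists2 w', L (a, w') & b0 <= w' <= w.
Proof.
move=> Ha Hlb [a' [w' [HL Haa Hbw Hww]]].
have [c Hc HLc] := partner_H Ha.
exists (c `&` w'); first by have := L_meet HLc HL; rewrite (meet_idPl Haa).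
rewrite lexI Hbw (le_trans (leIr _ _) Hww) !andbT.
by apply: Hlb => //; rewrite (L_pullback HLc).
Qed.

Section LiftDown.
Variables (k : nat) (Hup : lift_up k) (a : A) (b0 : B).
Hypotheses (Ha : HX X k a) (Hlb : lb_beta k a b0).

(* The invariant passes from G_{Y,j} to H_{Y,j}: it is closed under meets. *)
Lemma above_H j (IH : forall w, GX Y j w -> g a <= h w -> above a b0 w) w :
  HX Y j w -> g a <= h w -> above a b0 w.
Proof.
case=> W [HW HWw].
apply: (is_meet_ind (Q := fun w => g a <= h w -> above a b0 w)) HWw.
- by move=> x y Hx Hy; rewrite Hh.1 lexI => /andP [/Hx ? /Hy ?]; apply: above_meet.
- by move=> t Ht; apply: above_top Hlb Ht.
- by move=> w' /HW; apply: IH.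
Qed.

(* Inductive step: Dean's condition splits g a <= h w into the hypothesis
   [lift_up k] for a meetand of a, the induction hypothesis for a joinand of w,
   or a covered element of P. *)
Lemma above_G j : (j <= k)%N -> forall w, GX Y j w -> g a <= h w -> above a b0 w.
Proof.
elim: j => [|j IH] Hj w Hw Hgw.
  exact: above_covered Hlb (HcovY Hw) Hgw (lexx _).
have [r [rs [Ew Hr]]] := GS_dec Hw.
have Hwk : GX Y k w := GX_mono Hj Hw.
have [u [us [Ea HU]]] := H_pos_dec (leq_trans (ltn0Sn j) Hj) Ha.
move: (Hgw); rewrite {1}Ea {1}Ew.
case/dean_split => [[u' Hu' Hgu']|[r' Hr' Hgr']|[p Hp [Hp1 Hp2]]].
- rewrite -Ew in Hgu'.
  have [a' HL /andP [Hua' _]] := Hup Hwk (@ub_alpha_top k w) (HU u' Hu') Hgu'.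
  exists a', w; split => //.
  + by rewrite Ea; apply: le_trans (meet_ne_le Hu') Hua'.
  + by apply: Hlb => //; apply: G_in_H.
- rewrite -Ea in Hgr'; rewrite Ew; apply: above_up (join_ne_ge Hr') _.
  by apply: above_H (Hr r' Hr') Hgr' => w' Hw'; apply: IH (ltnW Hj) w' Hw'.
- by rewrite -Ea in Hp1; apply: above_covered Hlb (HcovP Hp) Hp1 _; rewrite Ew.
Qed.

End LiftDown.

Lemma lift_down_of_up k : lift_up k -> lift_down k.
Proof.
move=> Hup a b0 w Ha Hlb Hw Hgw; apply: (lift_of_above Ha Hlb).
exact: (above_H Hlb (above_G Hup Ha Hlb (leqnn k)) Hw Hgw).
Qed.

Lemma lift_both k : lift_up k /\ lift_down k.
Proof.
suff Hup : lift_up k by split => //; apply: lift_down_of_up.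
elim: k => [|k IH]; first exact: lift_up0.
exact/lift_upS/lift_down_of_up.
Qed.

Lemma alpha_in_L k b a : GX Y k b -> alpha_k X g k (h b) a -> L (a, b).
Proof.
move=> Hb [U [HU Ha]].
have Hub : ub_alpha k b a by move=> x Hx Hgx; apply: is_join_ge Ha; apply/HU.
suff [a' HL /andP [Haa' Ha'a]] : exists2 a', L (a', b) & a <= a' <= a.
  by have -> : a = a' by apply/le_anti; rewrite Haa' Ha'a.
apply: (is_join_ind (Q := fun v => exists2 a', L (a', b) & v <= a' <= a)) Ha.
- move=> x y [a1 H1 /andP [Hx1 H1a]] [a2 H2 /andP [Hy2 H2a]].
  exists (a1 `|` a2); first by have := L_join H1 H2; rewrite joinxx.
  by rewrite leU2 //= leUx H1a H2a.
- by move=> t /= ->; apply: (lift_of_below Hb Hub); apply: below_bot.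
- by move=> u /HU [Hu Hgu]; apply: ((lift_both k).1 _ _ _ Hb Hub Hu Hgu).
Qed.

Lemma beta_in_L k a b : HX X k a -> beta_k Y h k (g a) b -> L (a, b).
Proof.
move=> Ha [W [HW Hb]].
have Hlb : lb_beta k a b by move=> y Hy Hgy; apply: is_meet_le Hb; apply/HW.
suff [w' HL /andP [Hbw Hw'b]] : exists2 w', L (a, w') & b <= w' <= b.
  by have -> : b = w' by apply/le_anti; rewrite Hbw Hw'b.
apply: (is_meet_ind (Q := fun w => exists2 w', L (a, w') & b <= w' <= w)) Hb.
- move=> x y [w1 H1 /andP [Hb1 Hx1]] [w2 H2 /andP [Hb2 Hy2]].
  exists (w1 `&` w2); first by have := L_meet H1 H2; rewrite meetxx.
  by rewrite lexI Hb1 Hb2 leI2.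
- move=> t Ht; have Hat : g a <= h t.
    by rewrite Ht -(L_pullback L_top); apply: hom_mono Hg (boundA a).2.
  exact: ((lift_both k).2 _ _ _ Ha Hlb (top_in_H k Ht) Hat).
- by move=> w /HW [Hw Hgw]; apply: ((lift_both k).2 _ _ _ Ha Hlb Hw Hgw).
Qed.

End Claim.

Section Zlist.
Context {dA dB dD : Order.disp_t} {A : latticeType dA} {B : latticeType dB}
  {D : latticeType dD}.
Variables (X0 : seq A) (Y0 : seq B) (P : seq D) (g : A -> D) (h : B -> D)
  (ag bg : D -> A) (ah bh : D -> B).
Hypotheses (Hag : forall e, is_greatest_preimage g e (ag e))
  (Hbg : forall e, is_least_preimage g e (bg e))
  (Hah : forall e, is_greatest_preimage h e (ah e))
  (Hbh : forall e, is_least_preimage h e (bh e)).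

Local Notation E := (map g X0 ++ map h Y0 ++ P).
Local Notation Z := (Zlist X0 Y0 P g h ag bg ah bh).

Lemma Zlist_fiber z : z \in Z -> g z.1 = h z.2 /\ g z.1 \in E.
Proof.
rewrite /Zlist /= !mem_cat => /or4P [] /mapP [w Hw ->] /=.
- by rewrite (Hah _).1 map_f.
- by rewrite (Hbg _).1 map_f ?orbT.
- by rewrite (Hag _).1 (Hbh _).1 -!mem_cat.
- by rewrite (Hbg _).1 (Hah _).1 -!mem_cat.
Qed.

Lemma Zlist_covered e : e \in E -> (ag e, bh e) \in Z.
Proof. by move=> He; rewrite /Zlist /= !mem_cat map_f ?orbT. Qed.

Lemma Zlist_covered_fst x : x \in map fst Z -> (ag (g x), bh (g x)) \in Z.
Proof. by case/mapP => z /Zlist_fiber [_ HE] ->; apply: Zlist_covered. Qed.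

Lemma Zlist_covered_snd y : y \in map snd Z -> (ag (h y), bh (h y)) \in Z.
Proof.
by case/mapP => z /Zlist_fiber [Ez HE] ->; rewrite -Ez; apply: Zlist_covered.
Qed.

(* The coordinates of Z contain X0 and Y0, hence generate A and B. *)
Lemma Zlist_generates : generates X0 -> generates Y0 ->
  generates (map fst Z) /\ generates (map snd Z).
Proof.
move=> HX0 HY0; split=> c; [apply: gen_mono (HX0 c) | apply: gen_mono (HY0 c)].
- by move=> x Hx; apply/mapP; exists (x, ah (g x)); rewrite // /Zlist /= mem_cat map_f.
- move=> y Hy; apply/mapP; exists (bg (h y), y) => //.
  by rewrite /Zlist /= !mem_cat map_f ?orbT.
Qed.

End Zlist.

Theorem claim2 {dA dB dD : Order.disp_t}
  (A : latticeType dA) (B : latticeType dB) (D : latticeType dD)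
  (X0 : seq A) (Y0 : seq B) (P : seq D) (g : A -> D) (h : B -> D)
  (ag bg : D -> A) (ah bh : D -> B) :
  generates X0 -> generates Y0 -> generates P -> dean_D P ->
  lattice_epi g -> bounded g -> lattice_epi h -> bounded h ->
  (forall dd, is_greatest_preimage g dd (ag dd)) ->
  (forall dd, is_least_preimage g dd (bg dd)) ->
  (forall dd, is_greatest_preimage h dd (ah dd)) ->
  (forall dd, is_least_preimage h dd (bh dd)) ->
  let Z := Zlist X0 Y0 P g h ag bg ah bh in
  let X := map fst Z in
  let Y := map snd Z in
  forall k : nat,
    (forall (b : B) (a : A), GX Y k b -> alpha_k X g k (h b) a ->
       in_sublat_gen Z (a, b)) /\
    (forall (a : A) (b : B), HX X k a -> beta_k Y h k (g a) b ->
       in_sublat_gen Z (a, b)).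
Proof.
move=> HX0 HY0 _ HD [Hg _] _ [Hh _] _ Hag Hbg Hah Hbh Z X Y k; subst X Y.
have [HgX HgY] : generates (map fst Z) /\ generates (map snd Z).
  exact: Zlist_generates.
have HZ z : z \in Z -> g z.1 = h z.2 by case/(Zlist_fiber Hag Hbg Hah Hbh).
have HcovX x : x \in map fst Z -> (ag (g x), bh (g x)) \in Z.
  exact: Zlist_covered_fst.
have HcovY y : y \in map snd Z -> (ag (h y), bh (h y)) \in Z.
  exact: Zlist_covered_snd.
have HcovP p (Hp : p \in P) : (ag p, bh p) \in Z.
  by apply: Zlist_covered; rewrite !mem_cat Hp !orbT.
(* An empty Z has empty levels; otherwise the two parts apply. *)
move: HgX HgY HZ HcovX HcovY HcovP; clearbody Z.
case: Z => [|z0 zs] HgX HgY HZ HcovX HcovY HcovP.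
  by split=> ? ? /= H; [case: (GX_nil H) | case: (HX_nil H)].
split=> ? ?; first exact: (alpha_in_L Hg Hh Hag Hbh HD HgX HgY HZ HcovX HcovY HcovP).
exact: (beta_in_L Hg Hh Hag Hbh HD HgX HgY HZ HcovX HcovY HcovP).
Qed.
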